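(* Let $M$ be a finitely generated $\mathbb{N}^n$-graded $S$-module generated in squarefree degrees, with minimal $\mathbb{N}^n$-graded free resolution $0\leftarrow M\leftarrow F_0\leftarrow F_1\leftarrow\cdots\leftarrow F_r\leftarrow0$. Then $F_1$ is generated in squarefree degrees if and only if $F_i$ is generated in squarefree degrees for all $i=0,\dots,r$.
   Context: $S=\mathbb{k}[x_1,\dots,x_n]$ with fine $\mathbb{N}^n$-grading. A degree in $\mathbb{N}^n$ is squarefree if all its entries lie in $\{0,1\}$; a graded module is generated in squarefree degrees if it has a homogeneous generating set all of whose degrees are squarefree. *)

(* Multigraded free S-modules, S = k[x_1..x_n], encoded
   degree-wise by linear algebra over the field k. *)
From HB Require Import structures.
From mathcomp Require Import all_boot all_order all_algebra.
Set Implicit Arguments. Unset Strict Implicit. Unset Printing Implicit Defensive.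
Import GRing.Theory.
Local Open Scope ring_scope.

Definition mdeg (n : nat) := 'I_n -> nat.

Definition degle (n : nat) (a c : mdeg n) : bool := [forall i, (a i <= c i)%N].

Definition sqdeg (n : nat) (b : {ffun 'I_n -> bool}) : mdeg n := fun i => nat_of_bool (b i).

(* The free module F = (+)_j S(-a_j) (basis e_j of degree a_j, j < m).
   Its degree-c component has k-basis { x^(c - a_j) e_j | a_j <= c }, which we
   identify with the coordinate subspace of k^m spanned by those j; the row
   space of [Fc a c] is that subspace.  Multiplication by x^u : F_c -> F_(c+u)
   is then the inclusion of coordinate subspaces. *)
Definition Fc (k : fieldType) (n m : nat) (a : 'I_m -> mdeg n) (c : mdeg n) : 'M[k]_m :=
  \matrix_(j, l) (((j == l) && degle (a j) c)%:R).

(* The free module with basis degrees a is generated (as a graded module) by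
   its homogeneous elements of squarefree degree: every component F_c is the sum
   of the x^(c-b) F_b over squarefree b <= c. *)
Definition free_gen_sqfree (k : fieldType) (n m : nat) (a : 'I_m -> mdeg n) : Prop :=
  forall c : mdeg n,
    (Fc k a c <= \sum_(b : {ffun 'I_n -> bool} | degle (sqdeg b) c) Fc k a (sqdeg b))%MS.

(* The module M = coker (D : F' -> F), F with basis degrees a, F' with basis
   degrees a', D a homogeneous map (row-vector convention, v |-> v *m D), has
   M_c = F_c / D(F'_c).  M is generated by its homogeneous elements of squarefree
   degree: every M_c is the sum of the x^(c-b) M_b over squarefree b <= c. *)
Definition coker_gen_sqfree (k : fieldType) (n m p : nat)
    (a : 'I_m -> mdeg n) (a' : 'I_p -> mdeg n) (D : 'M[k]_(p, m)) : Prop :=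
  forall c : mdeg n,
    (Fc k a c <= (\sum_(b : {ffun 'I_n -> bool} | degle (sqdeg b) c) Fc k a (sqdeg b))
                  + Fc k a' c *m D)%MS.

(* Minimal N^n-graded free resolution  0 <- M <- F_0 <- F_1 <- ... <- F_r <- 0
   with M = coker d_1.  F_i = (+)_(j < m i) S(-a i j);  d i : F_i -> F_(i-1)
   (for i >= 1) sends e_j to sum_l (d i j l) x^(a i j - a (i-1) l) e_l.
   - F_i = 0 for i > r;
   - homogeneity and minimality: a nonzero entry d i j l forces
     a (i-1) l <= a i j strictly (so d_i(F_i) is contained in m F_(i-1));
   - complex: d_(i+1) d_i = 0 for i >= 1;
   - exactness at F_i (i >= 1), checked in every multidegree c. *)
Definition is_min_res (k : fieldType) (n : nat) (m : nat -> nat) (r : nat)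
    (a : forall i, 'I_(m i) -> mdeg n) (d : forall i, 'M[k]_(m i, m i.-1)) : Prop :=
  [/\ (forall i, (r < i)%N -> m i = 0%N),
      (forall i, (0 < i)%N -> forall j l, d i j l != 0 ->
          degle (a i.-1 l) (a i j) && ~~ degle (a i j) (a i.-1 l)),
      (forall i, (0 < i)%N -> d i.+1 *m d i = 0) &
      (forall i, (0 < i)%N -> forall c : mdeg n,
          (Fc k (a i) c :&: kermx (d i) <= Fc k (a i.+1) c *m d i.+1)%MS)].

(* A generator e_j of F_(i+1) in a minimal resolution has degree bounded by any
   upper bound c of the degrees occurring in d(e_j): otherwise, exactness in the
   degree min(deg e_j, c) rewrites d(e_j) as d(w) with w of smaller degree, so
   e_j - w is a cycle, hence a boundary, whose e_j-coordinate is 1 -- impossible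
   by minimality.  Taking c = (1,...,1) propagates squarefreeness from F_i to
   F_(i+1) for i >= 1, and the same minimality argument applied to the
   presentation of M shows that F_0 is generated in squarefree degrees. *)
From HB Require Import structures.
From mathcomp Require Import all_boot all_order all_algebra.
Set Implicit Arguments. Unset Strict Implicit. Unset Printing Implicit Defensive.
Import GRing.Theory.
Local Open Scope ring_scope.

Section Degrees.
Variable n : nat.
Implicit Types x y z : mdeg n.

Lemma degle_refl x : degle x x.
Proof. exact/forallP. Qed.

Lemma degle_trans y x z : degle x y -> degle y z -> degle x z.
Proof.
by move=> /forallP xy /forallP yz; apply/forallP => t; apply: leq_trans (xy t) (yz t).
Qed.

Definition mdeg_min x y : mdeg n := fun t => minn (x t) (y t).

Lemma degle_min z x y : degle z (mdeg_min x y) = degle z x && degle z y.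
Proof.
apply/forallP/andP => [le_z | [/forallP le_zx /forallP le_zy] t].
  by split; apply/forallP => t; have := le_z t; rewrite leq_min => /andP[].
by rewrite leq_min le_zx le_zy.
Qed.

Definition sqfree x : bool := degle x (fun=> 1%N).

Lemma sqfree_sqdeg b : sqfree (sqdeg b).
Proof. by apply/forallP => t; rewrite leq_b1. Qed.

Definition sqsupp x : {ffun 'I_n -> bool} := [ffun t => x t != 0%N].

Lemma sqdeg_sqsupp x : sqfree x -> sqdeg (sqsupp x) =1 x.
Proof.
by move=> /forallP x_le1 t; rewrite /sqdeg ffunE; case: (x t) (x_le1 t) => [|[]].
Qed.

End Degrees.

Section FreeModule.
Variables (k : fieldType) (n m : nat) (a : 'I_m -> mdeg n).
Implicit Types (c : mdeg n) (v : 'rV[k]_m).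

Lemma mulFcE c v j : (v *m Fc k a c) 0 j = v 0 j * (degle (a j) c)%:R.
Proof.
rewrite !mxE (bigD1 j) //= big1 ?addr0; first by rewrite !mxE eqxx.
by move=> l /negPf ne_lj; rewrite !mxE ne_lj mulr0.
Qed.

Lemma subFcP c v : (v <= Fc k a c)%MS <-> (forall j, v 0 j != 0 -> degle (a j) c).
Proof.
split=> [/submxP[w ->] j | supp_v].
  by rewrite mulFcE; case: (degle _ _); rewrite ?mulr0 ?eqxx.
apply/submxP; exists v; apply/rowP => j; rewrite mulFcE.
case: (eqVneq (v 0 j) 0) => [-> | /supp_v ->]; by rewrite ?mul0r ?mulr1.
Qed.

Lemma delta_sub_Fc c j : ((delta_mx 0 j : 'rV[k]_m) <= Fc k a c)%MS = degle (a j) c.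
Proof.
apply/idP/idP => [/subFcP -> // | le_jc]; first by rewrite mxE !eqxx oner_eq0.
by apply/subFcP => l; rewrite mxE eqxx /=; case: (eqVneq l j) => [-> | ]; rewrite ?eqxx.
Qed.

Lemma row_Fc c j :
  row j (Fc k a c) = if degle (a j) c then delta_mx 0 j else 0.
Proof.
by apply/rowP => l; case: ifP => le_jc; rewrite !mxE le_jc ?eqxx ?andbT ?andbF // eq_sym.
Qed.

Lemma sqfree_of_sub_sum_Fc_sqdeg c v j :
  (v <= \sum_(b : {ffun 'I_n -> bool} | degle (sqdeg b) c) Fc k a (sqdeg b))%MS ->
  v 0 j != 0 -> sqfree (a j).
Proof.
case/sub_sumsmxP => u ->; apply: contraTT => not_sqfree.
rewrite summxE big1 ?eqxx // => b _; rewrite mulFcE.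
suff /negPf -> : ~~ degle (a j) (sqdeg b) by rewrite mulr0.
by apply: contra not_sqfree => le_jb; apply: degle_trans le_jb (sqfree_sqdeg b).
Qed.

Lemma free_gen_sqfreeP : free_gen_sqfree k a <-> (forall j, sqfree (a j)).
Proof.
split=> [gen j | sqfree_a c].
  have e_j : ((delta_mx 0 j : 'rV[k]_m) <= Fc k a (a j))%MS.
    by rewrite delta_sub_Fc degle_refl.
  apply: sqfree_of_sub_sum_Fc_sqdeg (submx_trans e_j (gen (a j))) _.
  by rewrite mxE !eqxx oner_eq0.
apply/row_subP => j; rewrite row_Fc; case: ifP => [le_jc | _]; last exact: sub0mx.
have supp_j := sqdeg_sqsupp (sqfree_a j).
apply: (sumsmx_sup (sqsupp (a j))).
  by apply/forallP => t; rewrite supp_j; apply: (forallP le_jc).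
by rewrite delta_sub_Fc; apply/forallP => t; rewrite supp_j.
Qed.

End FreeModule.

Section MinimalMap.
Variables (k : fieldType) (n p q : nat) (a : 'I_p -> mdeg n) (b : 'I_q -> mdeg n).

Definition minimal_map (D : 'M[k]_(p, q)) :=
  forall j l, D j l != 0 -> degle (b l) (a j) && ~~ degle (a j) (b l).

Lemma minimal_boundary_coord0 D c (v : 'rV[k]_q) l :
  minimal_map D -> (v <= Fc k a c *m D)%MS -> degle c (b l) -> v 0 l = 0.
Proof.
move=> min_D /submxP[w ->] le_cl; rewrite mulmxA mxE big1 // => j _.
rewrite mulFcE; case: (eqVneq (D j l) 0) => [-> | /min_D /andP[_ not_le]].
  by rewrite mulr0.
by rewrite (contraNF (fun le_jc => degle_trans le_jc le_cl) not_le) mulr0 mul0r.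
Qed.

End MinimalMap.

Section MinimalResolution.
Variables (k : fieldType) (n : nat) (m : nat -> nat).
Variables (a : forall i, 'I_(m i) -> mdeg n) (d : forall i, 'M[k]_(m i, m i.-1)).
Arguments a : clear implicits.
Hypothesis d_min : forall i, (0 < i)%N -> minimal_map (a i) (a i.-1) (d i).

Lemma sqfree_res0 : coker_gen_sqfree (a 0%N) (a 1%N) (d 1%N) ->
  forall j, sqfree (a 0%N j).
Proof.
move=> gen j.
have e_j : ((delta_mx 0 j : 'rV[k]_(m 0%N)) <= Fc k (a 0%N) (a 0%N j))%MS.
  by rewrite delta_sub_Fc degle_refl.
have /sub_addsmxP[[s w] /= e_j_eq] := submx_trans e_j (gen (a 0%N j)).
have w_j0 : (w *m (Fc k (a 1%N) (a 0%N j) *m d 1%N)) 0 j = 0.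
  exact: minimal_boundary_coord0 (d_min (ltn0Sn 0)) (submxMl _ _) (degle_refl _).
apply: (sqfree_of_sub_sum_Fc_sqdeg (c := a 0%N j) (submxMl s _)).
have := congr1 (fun v : 'rV_(m 0%N) => v 0 j) e_j_eq.
by rewrite /= mxE [in X in X -> _]mxE w_j0 !eqxx addr0 /= => <-; apply: oner_neq0.
Qed.

Hypothesis d_complex : forall i, (0 < i)%N -> d i.+1 *m d i = 0.
Hypothesis d_exact : forall i, (0 < i)%N -> forall c : mdeg n,
  (Fc k (a i) c :&: kermx (d i) <= Fc k (a i.+1) c *m d i.+1)%MS.

Lemma res_degle_bound i j c : (0 < i)%N ->
  (forall l, d i.+1 j l != 0 -> degle (a i l) c) -> degle (a i.+1 j) c.
Proof.
move=> i_gt0 supp_le; apply/contraT => not_le_c.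
set e := a i.+1 j; pose c' := mdeg_min e c.
have not_le_c' : ~~ degle e c' by rewrite degle_min negb_and not_le_c orbT.
pose v := row j (d i.+1).
have v_c' : (v <= Fc k (a i) c')%MS.
  apply/subFcP => l; rewrite mxE => nz_l.
  by rewrite degle_min supp_le // andbT; case/andP: (d_min (ltn0Sn i) nz_l).
have v_cycle : v *m d i = 0 by rewrite -row_mul d_complex // row0.
have /submxP[w def_v] : (v <= Fc k (a i.+1) c' *m d i.+1)%MS.
  by apply: submx_trans (d_exact i_gt0 c'); rewrite sub_capmx v_c'; apply/sub_kermxP.
pose z := (delta_mx 0 j : 'rV_(m i.+1)) - w *m Fc k (a i.+1) c'.
have z_j : z 0 j = 1.
  rewrite [z 0 j]mxE [(- (w *m _)) 0 j]mxE mulFcE mxE (negPf not_le_c').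
  by rewrite !eqxx mulr0 subr0.
have z_e : (z <= Fc k (a i.+1) e)%MS.
  apply/subFcP => l; rewrite [z 0 l]mxE [(- (w *m _)) 0 l]mxE mulFcE mxE eqxx /=.
  case: (eqVneq l j) => [-> _ | _]; first exact: degle_refl.
  case le_lc': (degle (a i.+1 l) c'); last by rewrite mulr0 subr0 mulr0n eqxx.
  by move: le_lc'; rewrite degle_min => /andP[].
have z_cycle : z *m d i.+1 = 0.
  by rewrite mulmxBl -rowE -/v def_v mulmxA subrr.
have z_bd : (z <= Fc k (a i.+2) e *m d i.+2)%MS.
  by apply: submx_trans (d_exact (ltn0Sn i) e); rewrite sub_capmx z_e; apply/sub_kermxP.
have := minimal_boundary_coord0 (d_min (ltn0Sn i.+1)) z_bd (degle_refl e).
by rewrite z_j => /eqP; rewrite oner_eq0.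
Qed.

Lemma sqfree_res : (forall j, sqfree (a 1%N j)) ->
  forall i, (0 < i)%N -> forall j, sqfree (a i j).
Proof.
move=> sqfree1; elim=> // i IH _ j.
case: i IH j => [_ | i IH] j; first exact: sqfree1.
by apply: res_degle_bound => // l _; apply: IH.
Qed.

End MinimalResolution.

Theorem proposition3p6 (k : fieldType) (n r : nat) (m : nat -> nat)
    (a : forall i, 'I_(m i) -> mdeg n) (d : forall i, 'M[k]_(m i, m i.-1)) :
  is_min_res r a d ->
  coker_gen_sqfree (a 0%N) (a 1%N) (d 1%N) ->
  (free_gen_sqfree k (a 1%N) <-> (forall i, (i <= r)%N -> free_gen_sqfree k (a i))).
Proof.
move=> [m_gt_r d_min d_complex d_exact] M_gen; split=> [F1_gen i _ | F_gen].
  apply/free_gen_sqfreeP; case: i => [|i]; first exact: sqfree_res0 M_gen.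
  by apply: (sqfree_res d_min d_complex d_exact) => //; apply/free_gen_sqfreeP.
have [r_ge1 | r0] := leqP 1 r; first exact: F_gen.
apply/free_gen_sqfreeP => j; have := ltn_ord j.
by move: (nat_of_ord j); rewrite (m_gt_r _ r0).
Qed.
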